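(* Let $n\ge 2$, $m\ge 1$, let $\mathcal{R}=(r_{li})$ be an $(n+1)\times(n+1)$ normalized orthogonal matrix, let $\mathcal{A}\in S_{m,n+1}$ and $\mathcal{B}=\mathcal{R}^m\mathcal{A}$. Then $\mathcal{A}$ is completely decomposable if and only if $\mathcal{B}$ is completely decomposable, and $\mathcal{A}$ is regularly decomposable if and only if $\mathcal{B}$ is regularly decomposable.
   Context: $S_{m,n+1}$ is the space of real symmetric tensors $\mathcal{A}=(a_{i_1\ldots i_m})$ of order $m$ and dimension $n+1$, indices in $\{0,\ldots,n\}$; vectors are $\mathbf{x}=(x_0,\ldots,x_n)^\top$. A normalized orthogonal matrix is a matrix of the form $\mathcal{R}=\begin{pmatrix}1&\mathbf{0}^\top\\ \mathbf{0}&R\end{pmatrix}$ with $R$ an $n\times n$ real orthogonal matrix. $\mathcal{B}=\mathcal{R}^m\mathcal{A}$ means $b_{l_1\ldots l_m}=\sum_{i_1,\ldots,i_m=0}^n a_{i_1\ldots i_m}r_{l_1i_1}\cdots r_{l_mi_m}$. $\mathcal{A}$ is completely decomposable if $\mathcal{A}=\sum_{k=1}^r(\mathbf{u}^{(k)})^{\otimes m}$ for some $\mathbf{u}^{(k)}\in\mathbb{R}^{n+1}$, where $\mathbf{u}^{\otimes m}$ has entries $u_{i_1}\cdots u_{i_m}$. A vector $\mathbf{x}$ is regular if $x_0\ne0$ and $x_0^2=x_1^2+\cdots+x_n^2$. Row tensors: $\mathcal{A}_i=(a_{ii_2\ldots i_m})\in S_{m-1,n+1}$. Regularly decomposable: for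 even $m=2l$, $\mathcal{A}=\sum_{k=1}^r(\mathbf{u}^{(k)})^{\otimes m}$ with all $\mathbf{u}^{(k)}$ regular; for odd $m=2l+1$, $\mathcal{A}_0=\sum_{k=1}^r(\mathbf{u}^{(k)})^{\otimes 2l}$ with all $\mathbf{u}^{(k)}$ regular and $\mathcal{A}_i=\sum_{k=1}^r\frac{u^{(k)}_i}{u^{(k)}_0}(\mathbf{u}^{(k)})^{\otimes 2l}$ for $i=1,\ldots,n$. *)

From HB Require Import structures.
From mathcomp Require Import all_boot all_order all_algebra all_fingroup.
Set Implicit Arguments. Unset Strict Implicit. Unset Printing Implicit Defensive.
Import Order.TTheory GRing.Theory Num.Theory.
Local Open Scope ring_scope.

Notation tensor R m N := {ffun m.-tuple 'I_N -> R}.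

Definition symmetric_tensor (R : Type) (m N : nat) (A : tensor R m N) : Prop :=
  forall (t : m.-tuple 'I_N) (p : 'S_m),
    A [tuple tnth t (p j) | j < m] = A t.

Definition tpow (R : nzRingType) (m N : nat) (u : 'I_N -> R) : tensor R m N :=
  [ffun t : m.-tuple 'I_N => \prod_(j < m) u (tnth t j)].

Definition completely_decomposable (R : nzRingType) (m N : nat) (A : tensor R m N)
  : Prop :=
  exists (r : nat) (u : 'I_r -> 'I_N -> R), A = \sum_(k < r) tpow m (u k).

Definition tmul (R : nzRingType) (m N : nat) (Q : 'M[R]_N) (A : tensor R m N)
  : tensor R m N :=
  [ffun l : m.-tuple 'I_N =>
     \sum_(i : m.-tuple 'I_N) A i * \prod_(j < m) Q (tnth l j) (tnth i j)].

Definition normalized_orthogonal (R : nzRingType) (n : nat) (Q : 'M[R]_(n.+1))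
  : Prop :=
  exists Rm : 'M[R]_n, Rm^T *m Rm = 1%:M /\ Q = (block_mx (1%:M : 'M[R]_1) 0 0 Rm : 'M[R]_(1 + n)).

Definition regular_vec (R : nzRingType) (n : nat) (x : 'I_n.+1 -> R) : Prop :=
  x ord0 != 0 /\ x ord0 ^+ 2 = \sum_(i < n.+1 | i != ord0) x i ^+ 2.

(* entry of a tensor at an index sequence (0 if the length is not m) *)
Definition tentry (R : nzRingType) (m N : nat) (A : tensor R m N)
  (s : seq 'I_N) : R :=
  if insub s is Some t then A t else 0.

Definition row_tensor (R : nzRingType) (m N : nat) (A : tensor R m N) (i : 'I_N)
  : tensor R m.-1 N :=
  [ffun t : (m.-1).-tuple 'I_N => tentry A (i :: (t : seq 'I_N))].

Definition regularly_decomposable (R : fieldType) (m n : nat)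
  (A : tensor R m n.+1) : Prop :=
  if odd m then
    exists (r : nat) (u : 'I_r -> 'I_n.+1 -> R),
      (forall k, regular_vec (u k)) /\
      row_tensor A ord0 = \sum_(k < r) tpow m.-1 (u k) /\
      (forall i : 'I_n.+1, i != ord0 ->
         row_tensor A i =
           [ffun t => \sum_(k < r) (u k i / u k ord0) * tpow m.-1 (u k) t])
  else
    exists (r : nat) (u : 'I_r -> 'I_n.+1 -> R),
      (forall k, regular_vec (u k)) /\ A = \sum_(k < r) tpow m (u k).

From HB Require Import structures.
From mathcomp Require Import all_boot all_order all_algebra all_fingroup.
Import Order.TTheory GRing.Theory Num.Theory.
Set Implicit Arguments. Unset Strict Implicit. Unset Printing Implicit Defensive.
Local Open Scope ring_scope.

(* The map A |-> R^m A is linear and sends u^(x)m to (R u)^(x)m, so it maps a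
   decomposition of A with vectors u^(k) to one of B with vectors R u^(k).  A
   normalized orthogonal R fixes the coordinate u_0 and preserves the sum of
   squares, hence preserves regular vectors; for odd m the conditions on the
   row tensors say exactly that A = sum_k (u^(k)_0)^-1 (u^(k))^(x)m, a form that
   is transported in the same way.  Since R^T is again normalized orthogonal and
   R^T R = 1, the converse implications follow by applying (R^T)^m to B. *)

Definition tcomb (R : nzRingType) (m N r : nat) (c : 'I_r -> R)
    (u : 'I_r -> 'I_N -> R) : tensor R m N :=
  [ffun t => \sum_(k < r) c k * tpow m (u k) t].

Definition mx_apply (R : nzRingType) (N : nat) (Q : 'M[R]_N) (u : 'I_N -> R)
    : 'I_N -> R :=
  fun l => \sum_a Q l a * u a.

Section TensorTransform.
Variable R : comNzRingType.
Implicit Types (m N r : nat).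

Lemma prod_sum_tuple m N (F : 'I_m -> 'I_N -> R) :
  \prod_(j < m) \sum_(a : 'I_N) F j a =
  \sum_(t : m.-tuple 'I_N) \prod_(j < m) F j (tnth t j).
Proof.
rewrite bigA_distr_bigA /=.
rewrite (reindex (fun t : m.-tuple 'I_N => [ffun j => tnth t j])) /=; last first.
  apply: onW_bij; exists (fun f : {ffun 'I_m -> 'I_N} => [tuple f j | j < m]).
    by move=> t; apply: eq_from_tnth => j; rewrite tnth_mktuple ffunE.
  by move=> f; apply/ffunP => j; rewrite ffunE tnth_mktuple.
by apply: eq_bigr => t _; apply: eq_bigr => j _; rewrite ffunE.
Qed.

Lemma sum_tpowE m N r (u : 'I_r -> 'I_N -> R) :
  \sum_(k < r) tpow m (u k) = tcomb m (fun _ => 1) u.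
Proof.
by apply/ffunP => t; rewrite sum_ffunE ffunE; apply: eq_bigr => k _; rewrite mul1r.
Qed.

Lemma tmul_tpow m N (Q : 'M[R]_N) (u : 'I_N -> R) :
  tmul Q (tpow m u) = tpow m (mx_apply Q u).
Proof.
apply/ffunP => l; rewrite !ffunE /mx_apply prod_sum_tuple.
apply: eq_bigr => t _; rewrite ffunE -big_split /=.
by apply: eq_bigr => j _; rewrite mulrC.
Qed.

Lemma tmul_tcomb m N r (Q : 'M[R]_N) (c : 'I_r -> R) (u : 'I_r -> 'I_N -> R) :
  tmul Q (tcomb m c u) = tcomb m c (fun k => mx_apply Q (u k)).
Proof.
apply/ffunP => l; rewrite !ffunE.
under eq_bigr do rewrite ffunE mulr_suml.
rewrite exchange_big /=; apply: eq_bigr => k _.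
rewrite -tmul_tpow ffunE mulr_sumr; apply: eq_bigr => t _.
by rewrite mulrA.
Qed.

Lemma tmul_mul m N (P Q : 'M[R]_N) (A : tensor R m N) :
  tmul P (tmul Q A) = tmul (P *m Q) A.
Proof.
apply/ffunP => l; rewrite !ffunE.
under eq_bigr do rewrite ffunE mulr_suml.
rewrite exchange_big /=; apply: eq_bigr => i _.
under [X in _ = _ * X]eq_bigr do rewrite mxE.
rewrite prod_sum_tuple mulr_sumr; apply: eq_bigr => t _.
rewrite -mulrA -big_split /=; congr (_ * _).
by apply: eq_bigr => j _; rewrite mulrC.
Qed.

Lemma tmul1 m N (A : tensor R m N) : tmul 1%:M A = A.
Proof.
apply/ffunP => l; rewrite ffunE (bigD1 l) //=.
rewrite [X in _ * X]big1 ?mulr1; last by move=> j _; rewrite mxE eqxx.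
rewrite big1 ?addr0 // => i /eqP neq_il.
have [j neq_j] : exists j, tnth l j != tnth i j.
  apply/existsP; rewrite -negb_forall; apply/negP => /forallP eq_li.
  by apply: neq_il; apply: eq_from_tnth => j; apply/esym/eqP.
by rewrite (bigD1 j) //= mxE (negbTE neq_j) mul0r mulr0.
Qed.

Lemma completely_decomposable_tmul m N (Q : 'M[R]_N) (A : tensor R m N) :
  completely_decomposable A -> completely_decomposable (tmul Q A).
Proof.
case=> r [u ->]; exists r, (fun k => mx_apply Q (u k)).
by rewrite !sum_tpowE tmul_tcomb.
Qed.

Lemma sum_sqr_mx_apply N (Q : 'M[R]_N) (u : 'I_N -> R) : Q^T *m Q = 1%:M ->
  \sum_i mx_apply Q u i ^+ 2 = \sum_i u i ^+ 2.
Proof.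
move=> orthoQ; pose x : 'cV[R]_N := \col_j u j.
have : ((Q *m x)^T *m (Q *m x)) ord0 ord0 = (x^T *m x) ord0 ord0.
  by rewrite trmx_mul -mulmxA (mulmxA Q^T) orthoQ mul1mx.
rewrite !mxE; under eq_bigr do rewrite !mxE; under [in RHS]eq_bigr do rewrite !mxE.
move=> <-; apply: eq_bigr => i _; rewrite expr2.
by congr (_ * _); apply: eq_bigr => j _; rewrite mxE.
Qed.

End TensorTransform.

Section NormalizedOrthogonal.
Variables (R : comNzRingType) (n : nat) (Q : 'M[R]_n.+1).
Hypothesis normQ : normalized_orthogonal Q.

Lemma normalized_orthogonal_tr : normalized_orthogonal Q^T.
Proof.
case: normQ => S [orthoS ->]; exists S^T; split; first by rewrite trmxK mulmx1C.
apply: etrans (@tr_block_mx _ 1 n 1 n 1%:M 0 0 S) _.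
by rewrite !trmx0 trmx1.
Qed.

Lemma normalized_orthogonal_mulTmx : Q^T *m Q = 1%:M.
Proof.
case: normQ => S [orthoS ->].
rewrite (@tr_block_mx _ 1 n 1 n 1%:M 0 0 S) !trmx0 trmx1.
rewrite (@mulmx_block _ 1 n 1 n 1 n) !mul1mx !mulmx0 !mul0mx !addr0 !add0r.
by rewrite orthoS -scalar_mx_block.
Qed.

Lemma normalized_orthogonal_row0 (j : 'I_n.+1) : Q ord0 j = (ord0 == j)%:R.
Proof.
case: normQ => S [_ ->]; have -> : ord0 = lshift n (ord0 : 'I_1) by exact: val_inj.
rewrite -(@splitK 1 n j); case: split => k /=.
  by apply: etrans (block_mxEul _ _ _ _ _ _) _; rewrite !mxE (ord1 k) !eqxx.
by apply: etrans (block_mxEur _ _ _ _ _ _) _; rewrite mxE.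
Qed.

Lemma mx_apply_ord0 (u : 'I_n.+1 -> R) : mx_apply Q u ord0 = u ord0.
Proof.
rewrite /mx_apply (bigD1 ord0) //= normalized_orthogonal_row0 eqxx mul1r.
rewrite big1 ?addr0 // => j j_neq0.
by rewrite normalized_orthogonal_row0 eq_sym (negbTE j_neq0) mul0r.
Qed.

Lemma regular_vec_mx_apply (u : 'I_n.+1 -> R) :
  regular_vec u -> regular_vec (mx_apply Q u).
Proof.
have sum_sqr_off0 (x : 'I_n.+1 -> R) :
    \sum_(i < n.+1 | i != ord0) x i ^+ 2 = \sum_i x i ^+ 2 - x ord0 ^+ 2.
  by rewrite [in RHS](bigD1 ord0) //= addrC addrK.
case=> u0_neq0 u0_sqr; rewrite /regular_vec mx_apply_ord0; split => //.
rewrite !sum_sqr_off0 sum_sqr_mx_apply ?normalized_orthogonal_mulTmx //.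
by rewrite mx_apply_ord0 -sum_sqr_off0.
Qed.

End NormalizedOrthogonal.

Section RowTensors.
Variable R : nzRingType.
Implicit Types (m N r : nat).

Lemma eq_tcomb m N r (c d : 'I_r -> R) (u : 'I_r -> 'I_N -> R) :
  (forall k, c k = d k) -> tcomb m c u = tcomb m d u.
Proof.
by move=> eq_cd; apply/ffunP => t; rewrite !ffunE; apply: eq_bigr => k _; rewrite eq_cd.
Qed.

Lemma row_tensorE m N (A : tensor R m.+1 N) i (t : m.-tuple 'I_N) :
  row_tensor A i t = A [tuple of i :: t].
Proof.
rewrite ffunE /tentry; case: insubP => [t' _ val_t'|].
  by congr (A _); apply: val_inj.
by move=> /negP; rewrite [in X in ~ X]/= [in X in ~ X]size_tuple eqxx.
Qed.

Lemma tensor_eq_rows m N (A B : tensor R m.+1 N) :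
  (forall i, row_tensor A i = row_tensor B i) -> A = B.
Proof.
move=> eq_rows; apply/ffunP => t.
move/ffunP/(_ [tuple of behead t]): (eq_rows (thead t)).
by rewrite !row_tensorE -tuple_eta.
Qed.

Lemma row_tensor_tcomb m N r (c : 'I_r -> R) (u : 'I_r -> 'I_N -> R) i :
  row_tensor (tcomb m.+1 c u) i = tcomb m (fun k => c k * u k i) u.
Proof.
apply/ffunP => t; rewrite row_tensorE !ffunE; apply: eq_bigr => k _.
rewrite !ffunE big_ord_recl tnth0 mulrA.
by congr (_ * _); apply: eq_bigr => j _; rewrite tnthS.
Qed.

End RowTensors.

Section RegularDecomposition.
Variable R : fieldType.

Definition regular_weight (m n : nat) (u : 'I_n.+1 -> R) : R :=
  if odd m then (u ord0)^-1 else 1.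

Lemma odd_row_conditionsP m n r (A : tensor R m.+1 n.+1)
    (u : 'I_r -> 'I_n.+1 -> R) :
  (forall k, u k ord0 != 0) ->
  (row_tensor A ord0 = \sum_(k < r) tpow m (u k) /\
   (forall i : 'I_n.+1, i != ord0 ->
      row_tensor A i =
        [ffun t => \sum_(k < r) (u k i / u k ord0) * tpow m (u k) t]))
  <-> A = tcomb m.+1 (fun k => (u k ord0)^-1) u.
Proof.
move=> u0_neq0.
have rowsE (B : tensor R m.+1 n.+1) :
    (forall i, row_tensor B i = tcomb m (fun k => u k i / u k ord0) u) <->
    B = tcomb m.+1 (fun k => (u k ord0)^-1) u.
  split=> [rowsB|-> i]; first apply: tensor_eq_rows => i;
    by rewrite ?rowsB row_tensor_tcomb; apply: eq_tcomb => k; rewrite mulrC.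
apply: (iff_trans _ (rowsE A)); rewrite sum_tpowE.
split=> [[row0 rows] i|rows]; last first.
  by split=> [|i _]; rewrite rows //; apply: eq_tcomb => k; rewrite divff.
case: (eqVneq i ord0) => [->|/rows //]; rewrite row0.
by apply: eq_tcomb => k; rewrite divff.
Qed.

Lemma regularly_decomposableP m n (A : tensor R m n.+1) :
  regularly_decomposable A <->
  exists r (u : 'I_r -> 'I_n.+1 -> R), (forall k, regular_vec (u k)) /\
    A = tcomb m (fun k => regular_weight m (u k)) u.
Proof.
rewrite /regularly_decomposable /regular_weight; case: ifP => [odd_m|_].
  case: m A odd_m => // m A _ /=; split=> -[r [u [reg decA]]]; exists r, u; split=> //.
    by apply/(odd_row_conditionsP A) => // k; case: (reg k).
  by apply/(odd_row_conditionsP A) => // k; case: (reg k).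
by split=> -[r [u [reg decA]]]; exists r, u; rewrite decA sum_tpowE.
Qed.

Lemma regularly_decomposable_tmul m n (Q : 'M[R]_n.+1) (A : tensor R m n.+1) :
  normalized_orthogonal Q ->
  regularly_decomposable A -> regularly_decomposable (tmul Q A).
Proof.
move=> normQ /regularly_decomposableP[r [u [reg ->]]]; apply/regularly_decomposableP.
exists r, (fun k => mx_apply Q (u k)); split=> [k|]; first exact: regular_vec_mx_apply.
by rewrite tmul_tcomb; apply: eq_tcomb => k; rewrite /regular_weight mx_apply_ord0.
Qed.

End RegularDecomposition.

Theorem theorem4p1 (R : realFieldType) (n m : nat) (Q : 'M[R]_(n.+1))
  (A : tensor R m n.+1) :
  (2 <= n)%N -> (1 <= m)%N ->
  normalized_orthogonal Q -> symmetric_tensor A ->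
  (completely_decomposable A <-> completely_decomposable (tmul Q A)) /\
  (regularly_decomposable A <-> regularly_decomposable (tmul Q A)).
Proof.
move=> _ _ normQ _.
have normQT := normalized_orthogonal_tr normQ.
have tmulK : tmul Q^T (tmul Q A) = A.
  by rewrite tmul_mul normalized_orthogonal_mulTmx // tmul1.
split; split.
- exact: completely_decomposable_tmul.
- by move=> /(completely_decomposable_tmul Q^T); rewrite tmulK.
- exact: regularly_decomposable_tmul.
- by move=> /(regularly_decomposable_tmul normQT); rewrite tmulK.
Qed.
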